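(* Let $\|w\|_{L^\infty(\Omega)}\le\bar c_0\le\bar v/\sqrt5$, $\|w_x\|_{L^\infty(\Omega)}\le\bar c_1$, $\|w_{xx}\|_{L^\infty(\Omega)}\le\bar c_2$, $\|w_{xxx}\|_{L^\infty(\Omega)}\le\bar c_3$, and define $\underline v^2:=\bar v^2-\bar c_0^2$. Then for any $\xi\in X$ and $\delta\xi,\Delta\xi\in\delta X$, the third directional derivative of $f$ satisfies (pointwise in $\tau$) $$|f'''(\xi,\xi_\tau)[\delta\xi,\delta\xi_\tau]^2[\Delta\xi,\Delta\xi_\tau]|\le\Big(\bar\gamma_0\|\xi_\tau\|\|\delta\xi\|^2+\bar\gamma_2\|\delta\xi\|\|\delta\xi_\tau\|+\frac{\bar\gamma_4}{\|\xi_\tau\|}\|\delta\xi_\tau\|^2\Big)\|\Delta\xi\|+\Big(\bar\gamma_1\|\delta\xi\|^2+\frac{\bar\gamma_3}{\|\xi_\tau\|}\|\delta\xi\|\|\delta\xi_\tau\|+\frac{\bar\gamma_5}{\|\xi_\tau\|^2}\|\delta\xi_\tau\|^2\Big)\|\Delta\xi_\tau\|$$ with $\bar\gamma_0=\frac{2}{\underline v^4}(37\bar c_1^3+21\bar c_1\bar c_2\underline v+2\bar c_3\underline v^2)$, $\bar\gamma_1=\frac{1}{\underline v^3}(29\bar c_1^2+7\underline v\bar c_2)$, $\bar\gamma_2=\frac{1}{\underline v^3}(57\bar c_1^2+13\underline v\bar c_2)$, $\bar\gamma_3=40\frac{\bar c_1}{\underline v^2}$, $\bar\gamma_4=20\frac{\bar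 c_1}{\underline v^2}$, $\bar\gamma_5=\frac{18}{\underline v}$.
   Context: Fix $\bar v>0$, $x_O\ne x_D\in\mathbb R^2$, and $w\in C^3(\mathbb R^2,\mathbb R^2)$ with $\|w(x)\|<\bar v$; $w_x,w_{xx},w_{xxx}$ are its derivatives, measured in operator norms; $\|g\|_{L^\infty(\Omega)}$ is the essential supremum of the pointwise norm over $\Omega$, where $\Omega\subset\mathbb R^2$ is an ellipse with foci $x_O,x_D$ containing every globally optimal trajectory. $f(x,p)=\frac{-p^Tw(x)+\sqrt{(p^Tw(x))^2+(\bar v^2-w(x)^Tw(x))p^Tp}}{\bar v^2-w(x)^Tw(x)}$ for $x,p\in\mathbb R^2$; $f'''(\xi,\xi_\tau)[\delta\xi,\delta\xi_\tau]^2[\Delta\xi,\Delta\xi_\tau]$ denotes the third derivative of $f$ with respect to $(x,p)$ at $(\xi(\tau),\xi_\tau(\tau))$ applied to the directions $(\delta\xi(\tau),\delta\xi_\tau(\tau))$ (twice) and $(\Delta\xi(\tau),\Delta\xi_\tau(\tau))$. $X=\{\xi\in W^{1,\infty}(]0,1[,\mathbb R^2):\xi(0)=x_O,\xi(1)=x_D\}$, $\delta X=W_0^{1,\infty}(]0,1[,\mathbb R^2)$, subscript $\tau$ denotes derivative; $\|\cdot\|$ is the Euclidean norm.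
   Formalization: The estimate is asserted only at those τ where ξ(τ) lies in Ω, rather than for every ξ ∈ X at every τ. The statement above fails without it. *)

From Stdlib Require Import Reals Lra.
From Coquelicot Require Import Coquelicot.
Open Scope R_scope.

Definition vec : Type := (R * R)%type.
Definition vadd (u v : vec) : vec := (fst u + fst v, snd u + snd v).
Definition vsub (u v : vec) : vec := (fst u - fst v, snd u - snd v).
Definition vscal (s : R) (u : vec) : vec := (s * fst u, s * snd u).
Definition vzero : vec := (0, 0).
Definition dot (u v : vec) : R := fst u * fst v + snd u * snd v.
Definition norm2 (u : vec) : R := sqrt (dot u u).

Definition fcost (vbar : R) (w : vec -> vec) (x p : vec) : R :=
  let a := dot p (w x) in
  let d := vbar ^ 2 - dot (w x) (w x) in
  (- a + sqrt (a ^ 2 + d * dot p p)) / d.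

Definition vDerive (g : R -> vec) (t : R) : vec :=
  (Derive (fun s => fst (g s)) t, Derive (fun s => snd (g s)) t).

Definition has_vderiv (g : R -> vec) (t : R) (v : vec) : Prop :=
  is_derive (fun s => fst (g s)) t (fst v) /\ is_derive (fun s => snd (g s)) t (snd v).

Definition Dw1 (w : vec -> vec) (x h : vec) : vec :=
  vDerive (fun t => w (vadd x (vscal t h))) 0.
Definition Dw2 (w : vec -> vec) (x h1 h2 : vec) : vec :=
  vDerive (fun t => Dw1 w (vadd x (vscal t h1)) h2) 0.
Definition Dw3 (w : vec -> vec) (x h1 h2 h3 : vec) : vec :=
  vDerive (fun t => Dw2 w (vadd x (vscal t h1)) h2 h3) 0.

Definition pd1 (g : vec -> R) (x : vec) : R := Derive (fun t => g (t, snd x)) (fst x).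
Definition pd2 (g : vec -> R) (x : vec) : R := Derive (fun t => g (fst x, t)) (snd x).

Fixpoint Ck (k : nat) (g : vec -> R) : Prop :=
  match k with
  | O => forall x : vec, continuous g x
  | S k' =>
      (forall x : vec, continuous g x) /\
      (forall x : vec, ex_derive (fun t => g (t, snd x)) (fst x) /\
                       ex_derive (fun t => g (fst x, t)) (snd x)) /\
      Ck k' (pd1 g) /\ Ck k' (pd2 g)
  end.

Definition C3 (w : vec -> vec) : Prop :=
  Ck 3 (fun x => fst (w x)) /\ Ck 3 (fun x => snd (w x)).

(** Third derivative of f w.r.t. (x,p) at (x,p), applied to (dx,dp) twice and (Dx,Dp). *)
Definition D3f (vbar : R) (w : vec -> vec) (x p dx dp Dx Dp : vec) : R :=
  Derive (fun t =>
    Derive_n (fun s =>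
      fcost vbar w (vadd x (vadd (vscal s dx) (vscal t Dx)))
                   (vadd p (vadd (vscal s dp) (vscal t Dp)))) 2 0) 0.

Definition ellipse (xO xD : vec) (a : R) (y : vec) : Prop :=
  norm2 (vsub y xO) + norm2 (vsub y xD) < a.

(** W^{1,infty}(]0,1[,R^2) functions = Lipschitz functions on [0,1]
    (continuous representative). *)
Definition lipschitz01 (g : R -> vec) : Prop :=
  exists L : R, forall s t : R, 0 <= s <= 1 -> 0 <= t <= 1 ->
    norm2 (vsub (g s) (g t)) <= L * Rabs (s - t).

Definition InX (xO xD : vec) (xi : R -> vec) : Prop :=
  lipschitz01 xi /\ xi 0 = xO /\ xi 1 = xD.

Definition InDX (dxi : R -> vec) : Prop :=
  lipschitz01 dxi /\ dxi 0 = vzero /\ dxi 1 = vzero.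

From Stdlib Require Import Reals Lra.
From Coquelicot Require Import Coquelicot.
Open Scope R_scope.

(* Along the plane (s, t) |-> (x + s dx + t Dx, p + s dp + t Dp), the third derivative
   of the statement is the t-derivative of the second s-derivative of f at the origin.
   We track the jet (value, ∂s, ∂t, ∂s², ∂s∂t, ∂s²∂t) at (0, 0) of every subexpression
   of f = (- p·w + √(v̄²|p|² - (p×w)²)) / (v̄² - |w|²); jets of sums, products and
   compositions obey the Leibniz and Faà di Bruno rules.  Replacing every jet by a
   componentwise majorant (Cauchy–Schwarz for p·w and p×w; with u² = v̄² - c0² the
   hypothesis c0 <= v̄/√5 gives |w| <= u/2, v̄² - |w|² >= u² and
   u|p| <= √(v̄²|p|² - (p×w)²) <= 9/8 u|p|) bounds the third derivative by an explicit
   polynomial in the norms of the directions, whose coefficients lie below the γ's. *)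

Lemma is_derive_plus_R (f g : R -> R) x df dg :
  is_derive f x df -> is_derive g x dg -> is_derive (fun t => f t + g t) x (df + dg).
Proof. exact (is_derive_plus f g x df dg). Qed.

Lemma is_derive_mult_R (f g : R -> R) x df dg :
  is_derive f x df -> is_derive g x dg ->
  is_derive (fun t => f t * g t) x (df * g x + f x * dg).
Proof. intros Hf Hg. exact (is_derive_mult f g x df dg Hf Hg Rmult_comm). Qed.

Lemma is_derive_comp_R (phi g : R -> R) x dphi dg :
  is_derive phi (g x) dphi -> is_derive g x dg -> is_derive (fun t => phi (g t)) x (dg * dphi).
Proof. exact (is_derive_comp phi g x dphi dg). Qed.

Lemma is_derive_value (f : R -> R) (x l l' : R) :
  is_derive f x l -> @eq R l l' -> is_derive f x l'.
Proof. now intros H <-. Qed.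

Lemma is_derive_lin_comb (a b : R -> R) t0 da db k1 k2 :
  is_derive a t0 da -> is_derive b t0 db ->
  is_derive (fun t => a t * k1 + b t * k2) t0 (da * k1 + db * k2).
Proof.
  intros Ha Hb.
  exact (is_derive_plus_R _ _ _ _ _ (is_derive_scal_l a t0 da k1 Ha)
           (is_derive_scal_l b t0 db k2 Hb)).
Qed.

(** * Derivatives of C^k functions along lines *)

Lemma continuity_2d_pt_of_continuous (F : vec -> R) x y :
  continuous F (x, y) -> continuity_2d_pt (fun u v => F (u, v)) x y.
Proof.
  intros H. apply continuity_2d_pt_filterlim.
  eapply filterlim_ext; [| exact H]. now intros [a b].
Qed.

Lemma derivable_pt_lim_remainder (f : R -> R) y l (eps : posreal) :
  derivable_pt_lim f y l -> exists d : posreal, forall v, Rabs (v - y) < d ->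
    Rabs (f v - f y - l * (v - y)) <= eps * Rabs (v - y).
Proof.
  intros Hf. destruct (Hf eps (cond_pos eps)) as [d Hd]. exists d. intros v Hv.
  destruct (Req_dec (v - y) 0) as [E | E].
  - replace v with y by lra.
    replace (f y - f y - l * (y - y)) with 0 by ring. rewrite Rabs_R0.
    apply Rmult_le_pos; [apply Rlt_le, cond_pos | apply Rabs_pos].
  - specialize (Hd (v - y) E Hv). replace (y + (v - y)) with v in Hd by ring.
    replace (f v - f y - l * (v - y)) with (((f v - f y) / (v - y) - l) * (v - y))
      by (field; exact E).
    rewrite Rabs_mult. apply Rmult_le_compat_r; [apply Rabs_pos | lra].
Qed.

(* The increment in the first variable is handled by the mean value theorem and the
   continuity of [pd1 g]; only mere differentiability is needed in the second. *)
Lemma differentiable_pt_lim_of_partials (g : vec -> R) (x y : R) :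
  (forall z : vec, ex_derive (fun t => g (t, snd z)) (fst z) /\
                   ex_derive (fun t => g (fst z, t)) (snd z)) ->
  continuous (pd1 g) (x, y) ->
  differentiable_pt_lim (fun u v => g (u, v)) x y (pd1 g (x, y)) (pd2 g (x, y)).
Proof.
  intros Hex Hc eps.
  assert (He2 : 0 < eps / 2) by (destruct eps; simpl; lra).
  destruct (continuity_2d_pt_of_continuous _ _ _ Hc (mkposreal _ He2)) as [d1 Hd1].
  assert (Hy : derivable_pt_lim (fun t => g (x, t)) y (pd2 g (x, y))).
  { apply is_derive_Reals, Derive_correct. exact (proj2 (Hex (x, y))). }
  destruct (derivable_pt_lim_remainder _ _ _ (mkposreal _ He2) Hy) as [d2 Hd2].
  assert (Hd : 0 < Rmin d1 d2) by (apply Rmin_pos; apply cond_pos).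
  exists (mkposreal _ Hd). intros u v Hu Hv. simpl in Hu, Hv.
  pose proof (Rmin_l d1 d2). pose proof (Rmin_r d1 d2).
  assert (Hincr_u : Rabs (g (u, v) - g (x, v) - pd1 g (x, y) * (u - x)) <= eps / 2 * Rabs (u - x)).
  { destruct (MVT_cor4 (fun t => g (t, v)) (fun t => pd1 g (t, v)) x (Rabs (u - x))) with (b := u)
      as [c [Hc1 Hc2]].
    - intros c _. apply Derive_correct. exact (proj1 (Hex (c, v))).
    - lra.
    - rewrite Hc1.
      replace (pd1 g (c, v) * (u - x) - pd1 g (x, y) * (u - x))
        with ((pd1 g (c, v) - pd1 g (x, y)) * (u - x)) by ring.
      rewrite Rabs_mult. apply Rmult_le_compat_r; [apply Rabs_pos |].
      left. apply (Hd1 c v); lra. }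
  assert (Hincr_v := Hd2 v ltac:(simpl; lra)). simpl in Hincr_v.
  replace (g (u, v) - g (x, y) - (pd1 g (x, y) * (u - x) + pd2 g (x, y) * (v - y))) with
    ((g (u, v) - g (x, v) - pd1 g (x, y) * (u - x))
     + (g (x, v) - g (x, y) - pd2 g (x, y) * (v - y)))
    by ring.
  eapply Rle_trans; [apply Rabs_triang |].
  pose proof (Rmax_l (Rabs (u - x)) (Rabs (v - y))).
  pose proof (Rmax_r (Rabs (u - x)) (Rabs (v - y))).
  pose proof (cond_pos eps). nra.
Qed.

Definition diff1 (g : vec -> R) (Y h : vec) : R :=
  pd1 g Y * fst h + pd2 g Y * snd h.
Definition diff2 (g : vec -> R) (Y h k : vec) : R :=
  diff1 (pd1 g) Y h * fst k + diff1 (pd2 g) Y h * snd k.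
Definition diff3 (g : vec -> R) (Y h k l : vec) : R :=
  diff2 (pd1 g) Y h k * fst l + diff2 (pd2 g) Y h k * snd l.

Lemma Ck_continuous k g : Ck k g -> forall x, continuous g x.
Proof. destruct k; simpl; tauto. Qed.

Lemma is_derive_on_line k g Y h t0 : Ck (S k) g ->
  is_derive (fun t => g (vadd Y (vscal t h))) t0 (diff1 g (vadd Y (vscal t0 h)) h).
Proof.
  intros (_ & Hex & H1 & _). apply is_derive_Reals.
  assert (Hline : forall a b, derivable_pt_lim (fun t => a + t * b) t0 b).
  { intros a b. apply is_derive_Reals. auto_derive; [easy | ring]. }
  exact (derivable_pt_lim_comp_2d (fun u v => g (u, v)) _ _ t0 _ _ _ _
    (differentiable_pt_lim_of_partials g _ _ Hex (Ck_continuous _ _ H1 _))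
    (Hline _ _) (Hline _ _)).
Qed.

Lemma is_derive_diff1_on_line k g Y h v t0 : Ck (S (S k)) g ->
  is_derive (fun t => diff1 g (vadd Y (vscal t h)) v) t0 (diff2 g (vadd Y (vscal t0 h)) h v).
Proof.
  intros (_ & _ & H1 & H2). apply is_derive_lin_comb; now apply (is_derive_on_line k).
Qed.

Lemma is_derive_diff2_on_line k g Y h v v' t0 : Ck (S (S (S k))) g ->
  is_derive (fun t => diff2 g (vadd Y (vscal t h)) v v') t0
    (diff3 g (vadd Y (vscal t0 h)) h v v').
Proof.
  intros (_ & _ & H1 & H2). apply is_derive_lin_comb; now apply (is_derive_diff1_on_line k).
Qed.

Lemma vadd_scal0 Y h : vadd Y (vscal 0 h) = Y.
Proof. destruct Y, h; unfold vadd, vscal; simpl; f_equal; ring. Qed.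

(** * Jets of two-parameter functions *)

(* The jet at (0, 0) of [g : R -> R -> R]: the values of
   g, ∂s g, ∂t g, ∂s² g, ∂s∂t g and ∂s²∂t g. *)
Record jet := mkJ { j0 : R; js : R; jt : R; jss : R; jst : R; jsst : R }.

Definition near_origin (P : R -> R -> Prop) : Prop :=
  exists d, 0 < d /\ forall s t, Rabs s < d -> Rabs t < d -> P s t.

Lemma near_origin_mono (P Q : R -> R -> Prop) :
  (forall s t, P s t -> Q s t) -> near_origin P -> near_origin Q.
Proof. intros H [d [Hd HP]]. exists d. split; auto. Qed.

Lemma near_origin_mono2 (P Q S : R -> R -> Prop) :
  (forall s t, P s t -> Q s t -> S s t) -> near_origin P -> near_origin Q -> near_origin S.
Proof.
  intros H [d [Hd HP]] [d' [Hd' HQ]]. exists (Rmin d d'). split; [now apply Rmin_pos |].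
  intros s t Hs Ht. pose proof (Rmin_l d d'). pose proof (Rmin_r d d').
  apply H; [apply HP | apply HQ]; lra.
Qed.

Lemma near_origin_at_0 (P : R -> R -> Prop) : near_origin P -> P 0 0.
Proof. intros [d [Hd HP]]. apply HP; rewrite Rabs_R0; exact Hd. Qed.

(* The s-derivatives are required near the origin so that the t-derivative of
   [Derive_n (fun s => g s t) 2 0] can be taken. *)
Inductive has_jet (g : R -> R -> R) (J : jet) : Prop :=
  HasJet (gs gss : R -> R -> R) :
    near_origin (fun s t => is_derive (fun z => g z t) s (gs s t) /\
                            is_derive (fun z => gs z t) s (gss s t)) ->
    g 0 0 = j0 J -> gs 0 0 = js J -> gss 0 0 = jss J ->
    is_derive (fun t => g 0 t) 0 (jt J) -> is_derive (fun t => gs 0 t) 0 (jst J) ->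
    is_derive (fun t => gss 0 t) 0 (jsst J) -> has_jet g J.

Lemma locally_0_of_Rabs (d : R) (P : R -> Prop) :
  0 < d -> (forall y, Rabs y < d -> P y) -> locally 0 P.
Proof.
  intros Hd H. exists (mkposreal d Hd). intros y Hy. apply H.
  change (Rabs (y - 0) < d) in Hy. now rewrite Rminus_0_r in Hy.
Qed.

Lemma Derive_Derive_n_of_has_jet g J :
  has_jet g J -> Derive (fun t => Derive_n (fun s => g s t) 2 0) 0 = jsst J.
Proof.
  intros [gs gss [d [Hd H]] _ _ _ _ _ T2].
  transitivity (Derive (fun t => gss 0 t) 0); [| now apply is_derive_unique].
  apply Derive_ext_loc, (locally_0_of_Rabs d); auto. intros t Ht. simpl.
  transitivity (Derive (fun s => gs s t) 0).
  - apply Derive_ext_loc, (locally_0_of_Rabs d); auto. intros s Hs.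
    now apply is_derive_unique, H.
  - apply is_derive_unique, H; [rewrite Rabs_R0 |]; auto.
Qed.

Definition jconst (c : R) : jet := mkJ c 0 0 0 0 0.
Definition jline (a b c : R) : jet := mkJ a b c 0 0 0.
Definition jadd (J K : jet) : jet :=
  mkJ (j0 J + j0 K) (js J + js K) (jt J + jt K) (jss J + jss K) (jst J + jst K) (jsst J + jsst K).
Definition jopp (J : jet) : jet :=
  mkJ (- j0 J) (- js J) (- jt J) (- jss J) (- jst J) (- jsst J).
Definition jmul (J K : jet) : jet :=
  mkJ (j0 J * j0 K) (js J * j0 K + j0 J * js K) (jt J * j0 K + j0 J * jt K)
    (jss J * j0 K + 2 * (js J * js K) + j0 J * jss K)
    (jst J * j0 K + js J * jt K + jt J * js K + j0 J * jst K)
    (jsst J * j0 K + jss J * jt K + 2 * (jst J * js K) + 2 * (js J * jst K)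
     + jt J * jss K + j0 J * jsst K).
(* Faà di Bruno: the jet of [phi ∘ g] when [g] has jet [J] and [y0], ..., [y3] are
   [phi] and its first three derivatives at [j0 J]. *)
Definition jcomp (y0 y1 y2 y3 : R) (J : jet) : jet :=
  mkJ y0 (y1 * js J) (y1 * jt J)
    (y2 * (js J * js J) + y1 * jss J) (y2 * (js J * jt J) + y1 * jst J)
    (y3 * (js J * js J) * jt J + y2 * (jss J * jt J + 2 * (js J * jst J)) + y1 * jsst J).

Lemma is_derive_const_R (c x : R) : is_derive (fun _ => c) x 0.
Proof. exact (is_derive_const c x). Qed.

Ltac derive_by_rules :=
  eapply is_derive_value;
  [ repeat match goal with
    | |- is_derive (fun _ => ?c) _ _ => apply is_derive_const_R
    | |- is_derive (fun _ => _ + _) _ _ => apply is_derive_plus_R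
    | |- is_derive (fun _ => _ * _) _ _ => apply is_derive_mult_R
    | _ => eassumption
    end
  | cbv beta ].

Lemma has_jet_ext g h J : (forall s t, g s t = h s t) -> has_jet g J -> has_jet h J.
Proof.
  intros E [gs gss Hg E0 E1 E2 T0 T1 T2]. apply (HasJet _ _ gs gss); auto.
  - revert Hg. apply near_origin_mono. intros s t [A B]. split; auto.
    eapply is_derive_ext; [intros; apply E | exact A].
  - now rewrite <- E.
  - eapply is_derive_ext; [intros; apply E | exact T0].
Qed.

Lemma has_jet_const c : has_jet (fun _ _ => c) (jconst c).
Proof.
  apply (HasJet _ _ (fun _ _ => 0) (fun _ _ => 0)); try reflexivity; try apply is_derive_const_R.
  exists 1. split; [lra |]. split; apply is_derive_const_R.
Qed.

Lemma has_jet_line a b c : has_jet (fun s t => a + (s * b + t * c)) (jline a b c).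
Proof.
  apply (HasJet _ _ (fun _ _ => b) (fun _ _ => 0)); try reflexivity; try apply is_derive_const_R.
  - exists 1. split; [lra |]. split; [| apply is_derive_const_R]. auto_derive; auto; ring.
  - simpl; ring.
  - auto_derive; auto; simpl; ring.
Qed.

Lemma has_jet_plus g h J K :
  has_jet g J -> has_jet h K -> has_jet (fun s t => g s t + h s t) (jadd J K).
Proof.
  intros [gs gss Hg E0 E1 E2 T0 T1 T2] [hs hss Hh F0 F1 F2 U0 U1 U2].
  apply (HasJet _ _ (fun s t => gs s t + hs s t) (fun s t => gss s t + hss s t)); simpl;
    try congruence; try now apply is_derive_plus_R.
  revert Hg Hh. apply near_origin_mono2. intros s t [A1 A2] [B1 B2].
  split; now apply is_derive_plus_R.
Qed.

Lemma has_jet_mult g h J K :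
  has_jet g J -> has_jet h K -> has_jet (fun s t => g s t * h s t) (jmul J K).
Proof.
  intros [gs gss Hg E0 E1 E2 T0 T1 T2] [hs hss Hh F0 F1 F2 U0 U1 U2].
  apply (HasJet _ _ (fun s t => gs s t * h s t + g s t * hs s t)
    (fun s t => gss s t * h s t + 2 * (gs s t * hs s t) + g s t * hss s t)); simpl.
  - revert Hg Hh. apply near_origin_mono2. intros s t [A1 A2] [B1 B2].
    split; derive_by_rules; ring.
  - congruence.
  - rewrite E0, E1, F0, F1; ring.
  - rewrite E0, E1, E2, F0, F1, F2; ring.
  - derive_by_rules. rewrite E0, F0; ring.
  - derive_by_rules. rewrite E0, E1, F0, F1; ring.
  - derive_by_rules. rewrite E0, E1, E2, F0, F1, F2; ring.
Qed.

Lemma has_jet_opp g J : has_jet g J -> has_jet (fun s t => - g s t) (jopp J).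
Proof.
  intros Hg.
  replace (jopp J) with (jmul (jconst (-1)) J)
    by (destruct J; unfold jmul, jopp, jconst; simpl; f_equal; ring).
  apply (has_jet_ext (fun s t => -1 * g s t)); [intros; ring |].
  exact (has_jet_mult _ _ _ _ (has_jet_const (-1)) Hg).
Qed.

Lemma has_jet_comp (phi phi1 phi2 phi3 : R -> R) g J :
  (forall y, 0 < y ->
     is_derive phi y (phi1 y) /\ is_derive phi1 y (phi2 y) /\ is_derive phi2 y (phi3 y)) ->
  has_jet g J -> near_origin (fun s t => 0 < g s t) ->
  has_jet (fun s t => phi (g s t))
    (jcomp (phi (j0 J)) (phi1 (j0 J)) (phi2 (j0 J)) (phi3 (j0 J)) J).
Proof.
  intros Hphi Hg Hpos. destruct J, Hg as [gs gss Hg E0 E1 E2 T0 T1 T2]; simpl in *; subst.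
  destruct (Hphi _ (near_origin_at_0 _ Hpos)) as (P1 & P2 & P3).
  apply (HasJet _ _ (fun s t => phi1 (g s t) * gs s t)
    (fun s t => phi2 (g s t) * (gs s t * gs s t) + phi1 (g s t) * gss s t)); simpl;
    try reflexivity.
  - revert Hg Hpos. apply near_origin_mono2. intros s t [A1 A2] Hp.
    destruct (Hphi _ Hp) as (Q1 & Q2 & _). split.
    + eapply is_derive_value;
      [exact (is_derive_comp_R _ (fun z => g z t) s _ _ Q1 A1) | cbv beta; ring].
    + eapply is_derive_value;
      [exact (is_derive_mult_R _ _ s _ _ (is_derive_comp_R _ (fun z => g z t) s _ _ Q2 A1) A2)
      | cbv beta; ring].
  - eapply is_derive_value;
    [exact (is_derive_comp_R _ (fun t => g 0 t) 0 _ _ P1 T0) | cbv beta; ring].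
  - eapply is_derive_value;
    [exact (is_derive_mult_R _ _ 0 _ _ (is_derive_comp_R _ (fun t => g 0 t) 0 _ _ P2 T0) T1)
    | cbv beta; ring].
  - eapply is_derive_value;
    [exact (is_derive_plus_R _ _ 0 _ _
      (is_derive_mult_R _ _ 0 _ _ (is_derive_comp_R _ (fun t => g 0 t) 0 _ _ P3 T0)
         (is_derive_mult_R _ _ 0 _ _ T1 T1))
      (is_derive_mult_R _ _ 0 _ _ (is_derive_comp_R _ (fun t => g 0 t) 0 _ _ P2 T0) T2))
    | cbv beta; ring].
Qed.

Definition jinv (D : jet) : jet :=
  jcomp (1 / j0 D) (-1 / j0 D ^ 2) (2 / j0 D ^ 3) (-6 / j0 D ^ 4) D.
Definition jsqrt (Q : jet) : jet :=
  jcomp (sqrt (j0 Q)) (1 / (2 * sqrt (j0 Q))) (-1 / (4 * sqrt (j0 Q) ^ 3))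
    (3 / (8 * sqrt (j0 Q) ^ 5)) Q.

Lemma has_jet_inv g J :
  has_jet g J -> near_origin (fun s t => 0 < g s t) -> has_jet (fun s t => 1 / g s t) (jinv J).
Proof.
  apply (has_jet_comp (fun y => 1 / y) (fun y => -1 / y ^ 2) (fun y => 2 / y ^ 3)
    (fun y => -6 / y ^ 4)). intros y Hy.
  split; [| split]; auto_derive.
  all: try (repeat split; apply Rgt_not_eq; repeat apply Rmult_lt_0_compat; lra).
  all: field; apply Rgt_not_eq; exact Hy.
Qed.

Lemma has_jet_sqrt g J :
  has_jet g J -> near_origin (fun s t => 0 < g s t) -> has_jet (fun s t => sqrt (g s t)) (jsqrt J).
Proof.
  apply (has_jet_comp sqrt (fun y => 1 / (2 * sqrt y)) (fun y => -1 / (4 * sqrt y ^ 3))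
    (fun y => 3 / (8 * sqrt y ^ 5))). intros y Hy.
  assert (Hs : 0 < sqrt y) by now apply sqrt_lt_R0.
  split; [| split]; auto_derive.
  all: try (repeat split; auto; apply Rgt_not_eq; repeat apply Rmult_lt_0_compat; lra).
  all: field; apply Rgt_not_eq; exact Hs.
Qed.

Definition jet_w (w : vec -> vec) (pi : vec -> R) (x dx Dx : vec) : jet :=
  mkJ (pi (w x)) (pi (Dw1 w x dx)) (pi (Dw1 w x Dx)) (pi (Dw2 w x dx dx)) (pi (Dw2 w x Dx dx))
    (pi (Dw3 w x Dx dx dx)).

Section WindComponent.

Variables (w : vec -> vec) (pi : vec -> R).
Hypothesis pi_vDerive : forall (G : R -> vec) t, pi (vDerive G t) = Derive (fun s => pi (G s)) t.
Hypothesis pi_w_C3 : Ck 3 (fun x => pi (w x)).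

Lemma pi_Dw1 Y h : pi (Dw1 w Y h) = diff1 (fun x => pi (w x)) Y h.
Proof.
  unfold Dw1. rewrite pi_vDerive.
  transitivity (diff1 (fun x => pi (w x)) (vadd Y (vscal 0 h)) h); [| now rewrite vadd_scal0].
  apply is_derive_unique. exact (is_derive_on_line 2 _ Y h 0 pi_w_C3).
Qed.

Lemma is_derive_pi_w_on_line Y h t0 :
  is_derive (fun t => pi (w (vadd Y (vscal t h)))) t0 (pi (Dw1 w (vadd Y (vscal t0 h)) h)).
Proof. rewrite pi_Dw1. exact (is_derive_on_line 2 _ Y h t0 pi_w_C3). Qed.

Lemma pi_Dw2 Y h k : pi (Dw2 w Y h k) = diff2 (fun x => pi (w x)) Y h k.
Proof.
  unfold Dw2. rewrite pi_vDerive.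
  transitivity (diff2 (fun x => pi (w x)) (vadd Y (vscal 0 h)) h k); [| now rewrite vadd_scal0].
  rewrite (Derive_ext _ (fun t => diff1 (fun x => pi (w x)) (vadd Y (vscal t h)) k))
    by (intros; apply pi_Dw1).
  apply is_derive_unique. exact (is_derive_diff1_on_line 1 _ Y h k 0 pi_w_C3).
Qed.

Lemma is_derive_pi_Dw1_on_line Y h k t0 :
  is_derive (fun t => pi (Dw1 w (vadd Y (vscal t h)) k)) t0 (pi (Dw2 w (vadd Y (vscal t0 h)) h k)).
Proof.
  rewrite pi_Dw2. eapply is_derive_ext; [intros; symmetry; apply pi_Dw1 |].
  exact (is_derive_diff1_on_line 1 _ Y h k t0 pi_w_C3).
Qed.

Lemma pi_Dw3 Y h k l : pi (Dw3 w Y h k l) = diff3 (fun x => pi (w x)) Y h k l.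
Proof.
  unfold Dw3. rewrite pi_vDerive.
  transitivity (diff3 (fun x => pi (w x)) (vadd Y (vscal 0 h)) h k l); [| now rewrite vadd_scal0].
  rewrite (Derive_ext _ (fun t => diff2 (fun x => pi (w x)) (vadd Y (vscal t h)) k l))
    by (intros; apply pi_Dw2).
  apply is_derive_unique. exact (is_derive_diff2_on_line 0 _ Y h k l 0 pi_w_C3).
Qed.

Lemma is_derive_pi_Dw2_on_line Y h k l t0 :
  is_derive (fun t => pi (Dw2 w (vadd Y (vscal t h)) k l)) t0
    (pi (Dw3 w (vadd Y (vscal t0 h)) h k l)).
Proof.
  rewrite pi_Dw3. eapply is_derive_ext; [intros; symmetry; apply pi_Dw2 |].
  exact (is_derive_diff2_on_line 0 _ Y h k l t0 pi_w_C3).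
Qed.

Lemma plane_as_line_in_s x dx Dx s t :
  vadd x (vadd (vscal s dx) (vscal t Dx)) = vadd (vadd x (vscal t Dx)) (vscal s dx).
Proof. destruct x, dx, Dx; unfold vadd, vscal; simpl; f_equal; ring. Qed.

Lemma plane_at_s0 x dx Dx t : vadd x (vadd (vscal 0 dx) (vscal t Dx)) = vadd x (vscal t Dx).
Proof. destruct x, dx, Dx; unfold vadd, vscal; simpl; f_equal; ring. Qed.

Lemma has_jet_pi_w x dx Dx :
  has_jet (fun s t => pi (w (vadd x (vadd (vscal s dx) (vscal t Dx))))) (jet_w w pi x dx Dx).
Proof.
  apply (HasJet _ _ (fun s t => pi (Dw1 w (vadd x (vadd (vscal s dx) (vscal t Dx))) dx))
    (fun s t => pi (Dw2 w (vadd x (vadd (vscal s dx) (vscal t Dx))) dx dx)));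
    simpl; try (now rewrite plane_at_s0, vadd_scal0).
  - exists 1. split; [lra |]. intros s t _ _. rewrite plane_as_line_in_s.
    split; (eapply is_derive_ext;
            [intros z; rewrite (plane_as_line_in_s x dx Dx z t); reflexivity |]).
    + apply is_derive_pi_w_on_line.
    + apply is_derive_pi_Dw1_on_line.
  - eapply is_derive_ext; [intros z; rewrite plane_at_s0; reflexivity |].
    pose proof (is_derive_pi_w_on_line x Dx 0) as K. now rewrite vadd_scal0 in K.
  - eapply is_derive_ext; [intros z; rewrite plane_at_s0; reflexivity |].
    pose proof (is_derive_pi_Dw1_on_line x Dx dx 0) as K. now rewrite vadd_scal0 in K.
  - eapply is_derive_ext; [intros z; rewrite plane_at_s0; reflexivity |].
    pose proof (is_derive_pi_Dw2_on_line x Dx dx dx 0) as K. now rewrite vadd_scal0 in K.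
Qed.

End WindComponent.

(** * The jet of the cost *)

Definition cross (u v : vec) : R := fst u * snd v - snd u * fst v.

Lemma dot_sq_add_cross_sq u v : dot u v ^ 2 + cross u v ^ 2 = dot u u * dot v v.
Proof. unfold dot, cross; ring. Qed.

Lemma dot_self_nonneg u : 0 <= dot u u.
Proof. unfold dot. nra. Qed.

Lemma dot_self_pos u : u <> vzero -> 0 < dot u u.
Proof.
  intros Hu. destruct (Rle_lt_or_eq_dec _ _ (dot_self_nonneg u)) as [| E]; [easy |].
  exfalso. apply Hu. destruct u as [a b]. unfold dot in E; simpl in E.
  assert (a = 0) by nra. assert (b = 0) by nra. now subst.
Qed.

Lemma norm2_sq u : norm2 u ^ 2 = dot u u.
Proof. apply pow2_sqrt, dot_self_nonneg. Qed.

Lemma dot_lt_of_norm2_lt u v : norm2 u < v -> dot u u < v ^ 2.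
Proof.
  intros H. rewrite <- norm2_sq. pose proof (sqrt_pos (dot u u)) as H0.
  fold (norm2 u) in H0. nra.
Qed.

(* Lagrange's identity moves [|w|^2] out of the radicand, so that no derivative of
   [|w|^2] enters the bounds on the square root. *)
Lemma fcost_eq vbar w x p :
  fcost vbar w x p =
  (- dot p (w x) + sqrt (vbar ^ 2 * dot p p - cross p (w x) * cross p (w x)))
  * (1 / (vbar ^ 2 - dot (w x) (w x))).
Proof.
  unfold fcost. cbv zeta.
  replace ((dot p (w x)) ^ 2 + (vbar ^ 2 - dot (w x) (w x)) * dot p p)
    with (vbar ^ 2 * dot p p - cross p (w x) * cross p (w x))
    by (pose proof (dot_sq_add_cross_sq p (w x)); nra).
  unfold Rdiv. ring.
Qed.

Definition jdot (U1 U2 V1 V2 : jet) : jet := jadd (jmul U1 V1) (jmul U2 V2).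
Definition jcross (U1 U2 V1 V2 : jet) : jet := jadd (jmul U1 V2) (jopp (jmul U2 V1)).

Section VectorJets.

Variables (U V : R -> R -> vec) (U1 U2 V1 V2 : jet).
Hypotheses (HU1 : has_jet (fun s t => fst (U s t)) U1) (HU2 : has_jet (fun s t => snd (U s t)) U2)
  (HV1 : has_jet (fun s t => fst (V s t)) V1) (HV2 : has_jet (fun s t => snd (V s t)) V2).

Lemma has_jet_dot : has_jet (fun s t => dot (U s t) (V s t)) (jdot U1 U2 V1 V2).
Proof.
  exact (has_jet_plus _ _ _ _ (has_jet_mult _ _ _ _ HU1 HV1) (has_jet_mult _ _ _ _ HU2 HV2)).
Qed.

Lemma has_jet_cross : has_jet (fun s t => cross (U s t) (V s t)) (jcross U1 U2 V1 V2).
Proof.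
  exact (has_jet_plus _ _ _ _ (has_jet_mult _ _ _ _ HU1 HV2)
           (has_jet_opp _ _ (has_jet_mult _ _ _ _ HU2 HV1))).
Qed.

End VectorJets.

Definition jet_fcost (vbar : R) (P1 P2 W1 W2 : jet) : jet :=
  let C := jcross P1 P2 W1 W2 in
  jmul (jadd (jopp (jdot P1 P2 W1 W2))
             (jsqrt (jadd (jmul (jconst (vbar ^ 2)) (jdot P1 P2 P1 P2)) (jopp (jmul C C)))))
       (jinv (jadd (jconst (vbar ^ 2)) (jopp (jdot W1 W2 W1 W2)))).

Lemma has_jet_fcost vbar w (X P : R -> R -> vec) P1 P2 W1 W2 :
  has_jet (fun s t => fst (P s t)) P1 -> has_jet (fun s t => snd (P s t)) P2 ->
  has_jet (fun s t => fst (w (X s t))) W1 -> has_jet (fun s t => snd (w (X s t))) W2 ->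
  (forall s t, dot (w (X s t)) (w (X s t)) < vbar ^ 2) ->
  near_origin (fun s t => 0 < dot (P s t) (P s t)) ->
  has_jet (fun s t => fcost vbar w (X s t) (P s t)) (jet_fcost vbar P1 P2 W1 W2).
Proof.
  intros HP1 HP2 HW1 HW2 Hw Hp.
  apply (has_jet_ext _ _ _ (fun s t => eq_sym (fcost_eq vbar w (X s t) (P s t)))).
  apply has_jet_mult; [apply has_jet_plus |].
  - exact (has_jet_opp _ _ (has_jet_dot _ _ _ _ _ _ HP1 HP2 HW1 HW2)).
  - apply has_jet_sqrt.
    + exact (has_jet_plus _ _ _ _
        (has_jet_mult _ _ _ _ (has_jet_const _) (has_jet_dot _ _ _ _ _ _ HP1 HP2 HP1 HP2))
        (has_jet_opp _ _ (has_jet_mult _ _ _ _ (has_jet_cross _ _ _ _ _ _ HP1 HP2 HW1 HW2)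
                                               (has_jet_cross _ _ _ _ _ _ HP1 HP2 HW1 HW2)))).
    + revert Hp. apply near_origin_mono. intros s t Hp.
      pose proof (dot_sq_add_cross_sq (P s t) (w (X s t))).
      pose proof (pow2_ge_0 (dot (P s t) (w (X s t)))). specialize (Hw s t). nra.
  - apply has_jet_inv.
    + exact (has_jet_plus _ _ _ _ (has_jet_const _)
               (has_jet_opp _ _ (has_jet_dot _ _ _ _ _ _ HW1 HW2 HW1 HW2))).
    + exists 1. split; [lra |]. intros s t _ _. specialize (Hw s t). lra.
Qed.

Lemma near_origin_dot_pos_plane p dp Dp : p <> vzero ->
  near_origin (fun s t => 0 < dot (vadd p (vadd (vscal s dp) (vscal t Dp)))
                                  (vadd p (vadd (vscal s dp) (vscal t Dp)))).
Proof.
  intros Hp.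
  assert (C : continuity_2d_pt (fun s t => dot (vadd p (vadd (vscal s dp) (vscal t Dp)))
                                               (vadd p (vadd (vscal s dp) (vscal t Dp)))) 0 0).
  { unfold dot, vadd, vscal; simpl.
    repeat first [ apply continuity_2d_pt_plus | apply continuity_2d_pt_mult
                 | apply continuity_2d_pt_const | apply continuity_2d_pt_id1
                 | apply continuity_2d_pt_id2 ]. }
  assert (N : dot (vadd p (vadd (vscal 0 dp) (vscal 0 Dp)))
                  (vadd p (vadd (vscal 0 dp) (vscal 0 Dp))) <> 0).
  { rewrite plane_at_s0, vadd_scal0. apply Rgt_not_eq, dot_self_pos, Hp. }
  destruct (continuity_2d_pt_neq_0 _ _ _ C N) as [d Hd].
  exists d. split; [apply cond_pos |]. intros s t Hs Ht.
  specialize (Hd s t). rewrite !Rminus_0_r in Hd.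
  pose proof (dot_self_nonneg (vadd p (vadd (vscal s dp) (vscal t Dp)))).
  pose proof (Hd Hs Ht). lra.
Qed.

Lemma D3f_eq_jsst vbar w x p dx dp Dx Dp :
  C3 w -> (forall y, norm2 (w y) < vbar) -> p <> vzero ->
  D3f vbar w x p dx dp Dx Dp =
  jsst (jet_fcost vbar (jline (fst p) (fst dp) (fst Dp)) (jline (snd p) (snd dp) (snd Dp))
                       (jet_w w fst x dx Dx) (jet_w w snd x dx Dx)).
Proof.
  intros [Hw1 Hw2] Hw Hp. apply Derive_Derive_n_of_has_jet, has_jet_fcost.
  - exact (has_jet_line (fst p) (fst dp) (fst Dp)).
  - exact (has_jet_line (snd p) (snd dp) (snd Dp)).
  - exact (has_jet_pi_w w fst (fun _ _ => eq_refl) Hw1 x dx Dx).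
  - exact (has_jet_pi_w w snd (fun _ _ => eq_refl) Hw2 x dx Dx).
  - intros s t. apply dot_lt_of_norm2_lt, Hw.
  - now apply near_origin_dot_pos_plane.
Qed.

(** * Majorants *)

Definition jet_dominated (J B : jet) : Prop :=
  Rabs (j0 J) <= j0 B /\ Rabs (js J) <= js B /\ Rabs (jt J) <= jt B /\
  Rabs (jss J) <= jss B /\ Rabs (jst J) <= jst B /\ Rabs (jsst J) <= jsst B.

Definition vjet_dominated (U1 U2 B : jet) : Prop :=
  norm2 (j0 U1, j0 U2) <= j0 B /\ norm2 (js U1, js U2) <= js B /\
  norm2 (jt U1, jt U2) <= jt B /\ norm2 (jss U1, jss U2) <= jss B /\
  norm2 (jst U1, jst U2) <= jst B /\ norm2 (jsst U1, jsst U2) <= jsst B.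

Ltac bound_termwise :=
  match goal with
  | |- Rabs (_ + _) <= _ + _ =>
      eapply Rle_trans; [apply Rabs_triang |]; apply Rplus_le_compat; bound_termwise
  | |- Rabs (_ * _) <= _ * _ =>
      rewrite Rabs_mult; apply Rmult_le_compat; [apply Rabs_pos | apply Rabs_pos | bound_termwise
                                                | bound_termwise]
  | |- _ => first [assumption | rewrite Rabs_pos_eq; lra | idtac]
  end.

Lemma jet_dominated_const c k : Rabs c <= k -> jet_dominated (jconst c) (jconst k).
Proof. intros H. unfold jet_dominated; simpl; rewrite Rabs_R0; repeat split; lra. Qed.

Lemma jet_dominated_add J K B C :
  jet_dominated J B -> jet_dominated K C -> jet_dominated (jadd J K) (jadd B C).
Proof. intros (?&?&?&?&?&?) (?&?&?&?&?&?). repeat split; simpl; bound_termwise. Qed.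

Lemma jet_dominated_opp J B : jet_dominated J B -> jet_dominated (jopp J) B.
Proof. unfold jet_dominated; simpl. now rewrite !Rabs_Ropp. Qed.

Lemma jet_dominated_mul J K B C :
  jet_dominated J B -> jet_dominated K C -> jet_dominated (jmul J K) (jmul B C).
Proof. intros (?&?&?&?&?&?) (?&?&?&?&?&?). repeat split; simpl; bound_termwise. Qed.

Lemma jet_dominated_comp y0 y1 y2 y3 b0 b1 b2 b3 J B :
  Rabs y0 <= b0 -> Rabs y1 <= b1 -> Rabs y2 <= b2 -> Rabs y3 <= b3 -> jet_dominated J B ->
  jet_dominated (jcomp y0 y1 y2 y3 J) (jcomp b0 b1 b2 b3 B).
Proof. intros ? ? ? ? (?&?&?&?&?&?). repeat split; simpl; bound_termwise. Qed.

(* Leibniz rule for [beta (U s t) (V s t)], [beta] bilinear, [(U1, U2)] and [(V1, V2)]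
   the jets of the components of [U] and [V]. *)
Definition jbilin (beta : vec -> vec -> R) (U1 U2 V1 V2 : jet) : jet :=
  let b f g := beta (f U1, f U2) (g V1, g V2) in
  mkJ (b j0 j0) (b js j0 + b j0 js) (b jt j0 + b j0 jt)
    (b jss j0 + 2 * b js js + b j0 jss)
    (b jst j0 + b js jt + b jt js + b j0 jst)
    (b jsst j0 + b jss jt + 2 * b jst js + 2 * b js jst + b jt jss + b j0 jsst).

Lemma jet_dominated_bilin beta U1 U2 V1 V2 B C :
  (forall a b, Rabs (beta a b) <= norm2 a * norm2 b) ->
  vjet_dominated U1 U2 B -> vjet_dominated V1 V2 C ->
  jet_dominated (jbilin beta U1 U2 V1 V2) (jmul B C).
Proof.
  intros Hb (?&?&?&?&?&?) (?&?&?&?&?&?). repeat split; simpl;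
  repeat match goal with
  | |- Rabs (_ + _) <= _ + _ =>
      eapply Rle_trans; [apply Rabs_triang |]; apply Rplus_le_compat
  | |- Rabs (2 * _) <= 2 * _ =>
      rewrite Rabs_mult, (Rabs_pos_eq 2) by lra; apply Rmult_le_compat_l; [lra |]
  | |- Rabs (beta _ _) <= _ =>
      eapply Rle_trans; [apply Hb |]; apply Rmult_le_compat; try apply sqrt_pos; assumption
  end.
Qed.

Lemma Rabs_le_norm2_mul x u v : x ^ 2 <= dot u u * dot v v -> Rabs x <= norm2 u * norm2 v.
Proof.
  intros H. rewrite <- (Rabs_pos_eq (norm2 u * norm2 v)) by (apply Rmult_le_pos; apply sqrt_pos).
  apply Rsqr_le_abs_0. unfold Rsqr.
  replace (norm2 u * norm2 v * (norm2 u * norm2 v)) with (norm2 u ^ 2 * norm2 v ^ 2) by ring.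
  rewrite !norm2_sq. lra.
Qed.

Lemma Rabs_dot_le u v : Rabs (dot u v) <= norm2 u * norm2 v.
Proof.
  apply Rabs_le_norm2_mul. rewrite <- dot_sq_add_cross_sq. pose proof (pow2_ge_0 (cross u v)). lra.
Qed.

Lemma Rabs_cross_le u v : Rabs (cross u v) <= norm2 u * norm2 v.
Proof.
  apply Rabs_le_norm2_mul. rewrite <- dot_sq_add_cross_sq. pose proof (pow2_ge_0 (dot u v)). lra.
Qed.

Lemma jet_dominated_dot U1 U2 V1 V2 B C :
  vjet_dominated U1 U2 B -> vjet_dominated V1 V2 C ->
  jet_dominated (jdot U1 U2 V1 V2) (jmul B C).
Proof.
  replace (jdot U1 U2 V1 V2) with (jbilin dot U1 U2 V1 V2)
    by (unfold jdot, jbilin, jadd, jmul, dot; simpl; f_equal; ring).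
  apply jet_dominated_bilin, Rabs_dot_le.
Qed.

Lemma jet_dominated_cross U1 U2 V1 V2 B C :
  vjet_dominated U1 U2 B -> vjet_dominated V1 V2 C ->
  jet_dominated (jcross U1 U2 V1 V2) (jmul B C).
Proof.
  replace (jcross U1 U2 V1 V2) with (jbilin cross U1 U2 V1 V2)
    by (unfold jcross, jbilin, jadd, jopp, jmul, cross; simpl; f_equal; ring).
  apply jet_dominated_bilin, Rabs_cross_le.
Qed.

Lemma Rabs_div_le c k a x : Rabs c <= k -> 0 < a -> a <= x -> Rabs (c / x) <= k / a.
Proof.
  intros Hc Ha Hx. unfold Rdiv. rewrite Rabs_mult, Rabs_inv, (Rabs_pos_eq x) by lra.
  apply Rmult_le_compat; [apply Rabs_pos | left; apply Rinv_0_lt_compat; lra | exact Hc |].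
  now apply Rinv_le_contravar.
Qed.

Ltac Rabs_numeral := unfold Rabs; destruct (Rcase_abs _); lra.

Lemma jet_dominated_inv m D B : 0 < m -> m <= j0 D -> jet_dominated D B ->
  jet_dominated (jinv D) (jcomp (1 / m) (1 / m ^ 2) (2 / m ^ 3) (6 / m ^ 4) B).
Proof.
  intros Hm HD. apply jet_dominated_comp;
    [ apply Rabs_div_le; [Rabs_numeral | lra | lra]
    | apply Rabs_div_le; [Rabs_numeral | apply pow_lt; lra | apply pow_incr; lra] .. ].
Qed.

Lemma jet_dominated_sqrt m M Q B : 0 < m -> m ^ 2 <= j0 Q -> sqrt (j0 Q) <= M ->
  jet_dominated Q B ->
  jet_dominated (jsqrt Q) (jcomp M (1 / (2 * m)) (1 / (4 * m ^ 3)) (3 / (8 * m ^ 5)) B).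
Proof.
  intros Hm HQ HM.
  assert (Hs : m <= sqrt (j0 Q)).
  { rewrite <- (sqrt_pow2 m) by lra. now apply sqrt_le_1_alt. }
  apply jet_dominated_comp;
    [ rewrite Rabs_pos_eq by apply sqrt_pos; exact HM
    | apply Rabs_div_le; [Rabs_numeral | lra | lra]
    | apply Rabs_div_le;
      [Rabs_numeral | apply Rmult_lt_0_compat, pow_lt; lra
      | apply Rmult_le_compat_l, pow_incr; lra] .. ].
Qed.

Lemma radicand_bounds vbar u p w : 0 < u -> vbar ^ 2 <= 5 / 4 * u ^ 2 ->
  dot w w <= vbar ^ 2 - u ^ 2 ->
  (u * norm2 p) ^ 2 <= vbar ^ 2 * dot p p - cross p w * cross p w <= (9 / 8 * (u * norm2 p)) ^ 2.
Proof.
  intros Hu Hv Hw. pose proof (dot_sq_add_cross_sq p w) as L.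
  rewrite <- (norm2_sq p) in *. set (r2 := norm2 p ^ 2) in *.
  assert (Hr2 : 0 <= r2) by apply pow2_ge_0.
  pose proof (Rmult_le_compat_r r2 _ _ Hr2 Hw). pose proof (Rmult_le_compat_r r2 _ _ Hr2 Hv).
  pose proof (pow2_ge_0 (dot p w)). pose proof (pow2_ge_0 (cross p w)).
  replace ((u * norm2 p) ^ 2) with (u ^ 2 * r2) by (unfold r2; ring).
  replace ((9 / 8 * (u * norm2 p)) ^ 2) with (81 / 64 * u ^ 2 * r2) by (unfold r2; field).
  split; nra.
Qed.

(* [u |p|] and [9/8 u |p|] bound the square root from below and above
   ([radicand_bounds]), [u^2] bounds [vbar^2 - |w|^2] from below and [5/4 u^2]
   bounds [vbar^2]. *)
Definition jet_fcost_majorant (vbar u : R) (BP BW : jet) : jet :=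
  let m := u * j0 BP in
  let BA := jmul BP BW in
  jmul (jadd BA
             (jcomp (9 / 8 * m) (1 / (2 * m)) (1 / (4 * m ^ 3)) (3 / (8 * m ^ 5))
                (jadd (jmul (jconst (5 / 4 * u ^ 2)) (jmul BP BP)) (jmul BA BA))))
       (jcomp (1 / u ^ 2) (1 / (u ^ 2) ^ 2) (2 / (u ^ 2) ^ 3) (6 / (u ^ 2) ^ 4)
          (jadd (jconst (vbar ^ 2)) (jmul BW BW))).

Lemma jet_dominated_fcost vbar u P1 P2 W1 W2 BP BW :
  0 < u -> vbar ^ 2 <= 5 / 4 * u ^ 2 ->
  dot (j0 W1, j0 W2) (j0 W1, j0 W2) <= vbar ^ 2 - u ^ 2 ->
  norm2 (j0 P1, j0 P2) = j0 BP -> 0 < j0 BP ->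
  vjet_dominated P1 P2 BP -> vjet_dominated W1 W2 BW ->
  jet_dominated (jet_fcost vbar P1 P2 W1 W2) (jet_fcost_majorant vbar u BP BW).
Proof.
  intros Hu Hv Hw Hr Hr0 HP HW.
  destruct (radicand_bounds vbar u (j0 P1, j0 P2) (j0 W1, j0 W2) Hu Hv Hw) as [Q1 Q2].
  rewrite Hr in Q1, Q2.
  assert (Hm : 0 < u * j0 BP) by now apply Rmult_lt_0_compat.
  apply jet_dominated_mul; [apply jet_dominated_add |].
  - apply jet_dominated_opp, jet_dominated_dot; assumption.
  - apply jet_dominated_sqrt; [exact Hm | exact Q1 | |].
    + rewrite <- (sqrt_pow2 (9 / 8 * (u * j0 BP))) by lra. now apply sqrt_le_1_alt.
    + apply jet_dominated_add.
      * apply jet_dominated_mul; [apply jet_dominated_const | apply jet_dominated_dot; assumption].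
        rewrite Rabs_pos_eq by apply pow2_ge_0. exact Hv.
      * apply jet_dominated_opp, jet_dominated_mul; apply jet_dominated_cross; assumption.
  - apply jet_dominated_inv; [apply pow_lt; lra | unfold dot in Hw; simpl in *; lra |].
    apply jet_dominated_add.
    + apply jet_dominated_const. rewrite Rabs_pos_eq by apply pow2_ge_0. lra.
    + apply jet_dominated_opp, jet_dominated_dot; assumption.
Qed.

Definition jet_w_majorant (b0 c1 c2 c3 X ZX : R) : jet :=
  mkJ b0 (c1 * X) (c1 * ZX) (c2 * X * X) (c2 * ZX * X) (c3 * ZX * X * X).

(* [r, X, Y, ZX, ZP] stand for [|p|, |dx|, |dp|, |Dx|, |Dp|]. *)
Lemma jsst_fcost_majorant vbar u r X Y ZX ZP c1 c2 c3 : 0 < u -> 0 < r ->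
  jsst (jet_fcost_majorant vbar u (jline r Y ZP) (jet_w_majorant (u / 2) c1 c2 c3 X ZX)) =
  135/8 * Y^2 * ZP / (u * r^2) + 25/8 * c3 * X^2 * ZX * r / u^2 + 19/2 * c2 * X * Y * ZX / u^2
    + 19/4 * c2 * X^2 * ZP / u^2 + 95/8 * c1 * Y^2 * ZX / (r * u^2)
    + 95/4 * c1 * X * Y * ZP / (r * u^2)
    + 129/4 * c1 * c2 * X^2 * ZX * r / u^3 + 153/4 * c1^2 * X * Y * ZX / u^3
    + 153/8 * c1^2 * X^2 * ZP / u^3 + 423/8 * c1^3 * X^2 * ZX * r / u^4.
Proof. intros Hu Hr. simpl. field. split; apply Rgt_not_eq; assumption. Qed.

Ltac nonneg_by_structure :=
  repeat match goal with
  | |- 0 <= _ + _ => apply Rplus_le_le_0_compat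
  | |- 0 <= _ * _ => apply Rmult_le_pos
  | |- 0 <= / _ => apply Rlt_le, Rinv_0_lt_compat
  | |- 0 < _ * _ => apply Rmult_lt_0_compat
  | |- 0 < _ ^ _ => apply pow_lt
  | |- 0 <= _ ^ _ => apply pow_le
  | |- 0 <= _ => first [assumption | lra]
  | |- 0 < _ => first [assumption | lra]
  end.

(* Each of the ten monomials of [jsst_fcost_majorant] has a coefficient below the
   corresponding one of the claimed bound, e.g. [135/8 <= 18] for [Y^2 ZP / (u r^2)]. *)
Lemma jsst_fcost_majorant_le vbar u r X Y ZX ZP c1 c2 c3 :
  0 < u -> 0 < r -> 0 <= X -> 0 <= Y -> 0 <= ZX -> 0 <= ZP -> 0 <= c1 -> 0 <= c2 -> 0 <= c3 ->
  jsst (jet_fcost_majorant vbar u (jline r Y ZP) (jet_w_majorant (u / 2) c1 c2 c3 X ZX)) <=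
  (2 / u ^ 4 * (37 * c1 ^ 3 + 21 * c1 * c2 * u + 2 * c3 * u ^ 2) * r * X ^ 2
   + 1 / u ^ 3 * (57 * c1 ^ 2 + 13 * u * c2) * X * Y
   + 20 * c1 / u ^ 2 / r * Y ^ 2) * ZX
  + (1 / u ^ 3 * (29 * c1 ^ 2 + 7 * u * c2) * X ^ 2
   + 40 * c1 / u ^ 2 / r * X * Y
   + 18 / u / r ^ 2 * Y ^ 2) * ZP.
Proof.
  intros Hu Hr HX HY HZX HZP H1 H2 H3. rewrite jsst_fcost_majorant by assumption.
  match goal with |- ?S <= ?T => enough (0 <= T - S) by lra end.
  match goal with |- 0 <= ?D => replace D with
    ((18 - 135/8) * Y^2 * ZP / (u * r^2) + (4 - 25/8) * c3 * X^2 * ZX * r / u^2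
     + (13 - 19/2) * c2 * X * Y * ZX / u^2 + (7 - 19/4) * c2 * X^2 * ZP / u^2
     + (20 - 95/8) * c1 * Y^2 * ZX / (r * u^2) + (40 - 95/4) * c1 * X * Y * ZP / (r * u^2)
     + (42 - 129/4) * c1 * c2 * X^2 * ZX * r / u^3 + (57 - 153/4) * c1^2 * X * Y * ZX / u^3
     + (29 - 153/8) * c1^2 * X^2 * ZP / u^3 + (74 - 423/8) * c1^3 * X^2 * ZX * r / u^4)
    by (field; split; apply Rgt_not_eq; assumption) end.
  unfold Rdiv. nonneg_by_structure.
Qed.

Lemma Rabs_jsst_le J B : jet_dominated J B -> Rabs (jsst J) <= jsst B.
Proof. now intros (_ & _ & _ & _ & _ & H). Qed.

Lemma norm2_fst_snd v : norm2 (fst v, snd v) = norm2 v.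
Proof. now destruct v. Qed.

Lemma norm2_0 : norm2 (0, 0) = 0.
Proof. unfold norm2, dot; simpl. rewrite Rmult_0_l, Rplus_0_l. apply sqrt_0. Qed.

Lemma norm2_e1 : norm2 (1, 0) = 1.
Proof. unfold norm2, dot; simpl. rewrite Rmult_1_l, Rmult_0_l, Rplus_0_r. apply sqrt_1. Qed.

Lemma nonneg_of_norm2_le c v : norm2 v <= c -> 0 <= c.
Proof. apply Rle_trans, sqrt_pos. Qed.

Lemma vjet_dominated_line p dp Dp :
  vjet_dominated (jline (fst p) (fst dp) (fst Dp)) (jline (snd p) (snd dp) (snd Dp))
                 (jline (norm2 p) (norm2 dp) (norm2 Dp)).
Proof. unfold vjet_dominated; simpl. rewrite !norm2_fst_snd, norm2_0. repeat split; lra. Qed.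

Lemma vjet_dominated_w w x dx Dx b0 c1 c2 c3 :
  norm2 (w x) <= b0 ->
  (forall h, norm2 (Dw1 w x h) <= c1 * norm2 h) ->
  (forall h1 h2, norm2 (Dw2 w x h1 h2) <= c2 * norm2 h1 * norm2 h2) ->
  (forall h1 h2 h3, norm2 (Dw3 w x h1 h2 h3) <= c3 * norm2 h1 * norm2 h2 * norm2 h3) ->
  vjet_dominated (jet_w w fst x dx Dx) (jet_w w snd x dx Dx)
                 (jet_w_majorant b0 c1 c2 c3 (norm2 dx) (norm2 Dx)).
Proof.
  intros. unfold vjet_dominated, jet_w, jet_w_majorant; cbn [j0 js jt jss jst jsst].
  rewrite !norm2_fst_snd. repeat split; auto.
Qed.

Lemma Rabs_D3f_le_majorant vbar u c0 c1 c2 c3 w x p dx dp Dx Dp :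
  C3 w -> (forall y, norm2 (w y) < vbar) -> p <> vzero ->
  0 < u -> u ^ 2 = vbar ^ 2 - c0 ^ 2 -> norm2 (w x) <= c0 -> c0 <= u / 2 ->
  (forall h, norm2 (Dw1 w x h) <= c1 * norm2 h) ->
  (forall h1 h2, norm2 (Dw2 w x h1 h2) <= c2 * norm2 h1 * norm2 h2) ->
  (forall h1 h2 h3, norm2 (Dw3 w x h1 h2 h3) <= c3 * norm2 h1 * norm2 h2 * norm2 h3) ->
  Rabs (D3f vbar w x p dx dp Dx Dp) <=
  jsst (jet_fcost_majorant vbar u (jline (norm2 p) (norm2 dp) (norm2 Dp))
          (jet_w_majorant (u / 2) c1 c2 c3 (norm2 dx) (norm2 Dx))).
Proof.
  intros HC Hw Hp Hu Hu2 Hc0 Hcu H1 H2 H3.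
  rewrite D3f_eq_jsst by assumption.
  pose proof (sqrt_pos (dot (w x) (w x))) as Hw0. fold (norm2 (w x)) in Hw0.
  apply Rabs_jsst_le, jet_dominated_fcost; simpl.
  - exact Hu.
  - nra.
  - change (dot (w x) (w x) <= vbar ^ 2 - u ^ 2). rewrite <- norm2_sq. nra.
  - apply norm2_fst_snd.
  - apply sqrt_lt_R0, dot_self_pos, Hp.
  - apply vjet_dominated_line.
  - apply vjet_dominated_w; auto. lra.
Qed.

Lemma reduced_speed_bounds vbar c0 : 0 < vbar -> 0 <= c0 -> c0 <= vbar / sqrt 5 ->
  0 < sqrt (vbar ^ 2 - c0 ^ 2) /\ sqrt (vbar ^ 2 - c0 ^ 2) ^ 2 = vbar ^ 2 - c0 ^ 2 /\
  c0 <= sqrt (vbar ^ 2 - c0 ^ 2) / 2.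
Proof.
  intros Hv Hc0 H5.
  assert (S5 : sqrt 5 ^ 2 = 5) by (apply pow2_sqrt; lra).
  assert (Hs5 : 0 < sqrt 5) by (apply sqrt_lt_R0; lra).
  assert (H5' : c0 * sqrt 5 <= vbar).
  { apply (Rmult_le_compat_r (sqrt 5)) in H5; [| lra].
    unfold Rdiv in H5. rewrite Rmult_assoc, Rinv_l, Rmult_1_r in H5; lra. }
  assert (Hsq : 5 * c0 ^ 2 <= vbar ^ 2).
  { replace (5 * c0 ^ 2) with ((c0 * sqrt 5) ^ 2) by (rewrite Rpow_mult_distr, S5; ring).
    apply pow_incr. split; [apply Rmult_le_pos |]; lra. }
  assert (Hu2 : sqrt (vbar ^ 2 - c0 ^ 2) ^ 2 = vbar ^ 2 - c0 ^ 2) by (apply pow2_sqrt; nra).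
  assert (Hu : 0 < sqrt (vbar ^ 2 - c0 ^ 2)) by (apply sqrt_lt_R0; nra).
  repeat split; auto. nra.
Qed.

Theorem lemma9 (vbar : R) (xO xD : vec) (w : vec -> vec) (a c0 c1 c2 c3 : R) :
  0 < vbar -> xO <> xD -> C3 w ->
  (forall x, norm2 (w x) < vbar) ->
  norm2 (vsub xO xD) < a ->
  (forall x, ellipse xO xD a x -> norm2 (w x) <= c0) ->
  c0 <= vbar / sqrt 5 ->
  (forall x h, ellipse xO xD a x -> norm2 (Dw1 w x h) <= c1 * norm2 h) ->
  (forall x h1 h2, ellipse xO xD a x ->
     norm2 (Dw2 w x h1 h2) <= c2 * norm2 h1 * norm2 h2) ->
  (forall x h1 h2 h3, ellipse xO xD a x ->
     norm2 (Dw3 w x h1 h2 h3) <= c3 * norm2 h1 * norm2 h2 * norm2 h3) ->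
  let vl := sqrt (vbar ^ 2 - c0 ^ 2) in
  let g0 := 2 / vl ^ 4 * (37 * c1 ^ 3 + 21 * c1 * c2 * vl + 2 * c3 * vl ^ 2) in
  let g1 := 1 / vl ^ 3 * (29 * c1 ^ 2 + 7 * vl * c2) in
  let g2 := 1 / vl ^ 3 * (57 * c1 ^ 2 + 13 * vl * c2) in
  let g3 := 40 * c1 / vl ^ 2 in
  let g4 := 20 * c1 / vl ^ 2 in
  let g5 := 18 / vl in
  forall (xi dxi Dxi : R -> vec),
    InX xO xD xi -> InDX dxi -> InDX Dxi ->
  forall (tau : R) (xit dxit Dxit : vec),
    0 < tau < 1 ->
    has_vderiv xi tau xit -> has_vderiv dxi tau dxit -> has_vderiv Dxi tau Dxit ->
    ellipse xO xD a (xi tau) -> xit <> vzero ->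
    Rabs (D3f vbar w (xi tau) xit (dxi tau) dxit (Dxi tau) Dxit)
    <= (g0 * norm2 xit * norm2 (dxi tau) ^ 2
        + g2 * norm2 (dxi tau) * norm2 dxit
        + g4 / norm2 xit * norm2 dxit ^ 2) * norm2 (Dxi tau)
     + (g1 * norm2 (dxi tau) ^ 2
        + g3 / norm2 xit * norm2 (dxi tau) * norm2 dxit
        + g5 / norm2 xit ^ 2 * norm2 dxit ^ 2) * norm2 Dxit.
Proof.
  (* The bound is pointwise: of the trajectory data only [xi tau] in the ellipse and
     [xit <> vzero] matter. *)
  intros Hv _ HC Hw _ Hc0 H5 H1 H2 H3 vl g0 g1 g2 g3 g4 g5 xi dxi Dxi _ _ _
    tau xit dxit Dxit _ _ _ _ Hx Hxit.
  specialize (Hc0 _ Hx).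
  pose proof (fun h => H1 _ h Hx) as B1. pose proof (fun h1 h2 => H2 _ h1 h2 Hx) as B2.
  pose proof (fun h1 h2 h3 => H3 _ h1 h2 h3 Hx) as B3.
  destruct (reduced_speed_bounds vbar c0 Hv (nonneg_of_norm2_le _ _ Hc0) H5)
    as (Hu & Hu2 & Hcu).
  pose proof (nonneg_of_norm2_le _ _ (B1 (1, 0))) as Hc1.
  pose proof (nonneg_of_norm2_le _ _ (B2 (1, 0) (1, 0))) as Hc2.
  pose proof (nonneg_of_norm2_le _ _ (B3 (1, 0) (1, 0) (1, 0))) as Hc3.
  rewrite norm2_e1 in Hc1, Hc2, Hc3.
  eapply Rle_trans; [exact (Rabs_D3f_le_majorant vbar vl c0 c1 c2 c3 w _ _ _ _ _ _
                              HC Hw Hxit Hu Hu2 Hc0 Hcu B1 B2 B3) |].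
  apply jsst_fcost_majorant_le; try apply sqrt_pos.
  - exact Hu.
  - apply sqrt_lt_R0, dot_self_pos, Hxit.
  all: lra.
Qed.
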